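(* Let $(R_1,R_2,\ldots,R_h)$, $h\ge 2$, be rows whose overlap graph is the path $R_1-R_2-\cdots-R_h$ (i.e., $R_i$ and $R_j$ overlap if and only if $|i-j|=1$). For $1\le i\le h-1$ let $\mathcal A_i=\{R_i\setminus R_{i+1},\ R_i\cap R_{i+1},\ R_{i+1}\setminus R_i\}$ and $\mathcal A=\bigcup_{i=1}^{h-1}\mathcal A_i$. Let $C\subseteq \bigcup_{i=1}^h R_i$ be a set of columns. Then the overlap graph of the family $(R_1\cap C,\ldots,R_h\cap C)$ is connected if and only if every member of $\mathcal A$ contains an element of $C$.
   Context: Each row is identified with the set of columns in which it has a 1. Two rows (sets) overlap if their intersection is nonempty and neither is a subset of the other; the overlap graph of an indexed family of rows has one vertex per index and joins two indices when the corresponding rows overlap. *)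

From mathcomp Require Import all_boot.
Set Implicit Arguments. Unset Strict Implicit. Unset Printing Implicit Defensive.

(* Rows are finite sets of columns (columns range over a finite type T). *)
Definition overlap (T : finType) (A B : {set T}) : bool :=
  [&& A :&: B != set0, ~~ (A \subset B) & ~~ (B \subset A)].

Definition overlap_rel (T : finType) (I : finType) (R : I -> {set T}) : rel I :=
  fun i j => overlap (R i) (R j).

Definition overlap_connected (T : finType) (I : finType) (R : I -> {set T}) : Prop :=
  forall i j : I, connect (overlap_rel R) i j.

From mathcomp Require Import all_boot.
Set Implicit Arguments. Unset Strict Implicit. Unset Printing Implicit Defensive.

(* Two sets overlap exactly when the three "pieces" A :&: B, A :\: B and
   B :\: A are nonempty; hence A :&: C and B :&: C overlap exactly when each
   piece meets C.  In particular restricting to C can only delete edges of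
   the overlap graph, so the restricted graph on 'I_h still only joins
   consecutive indices.

   Two general facts about relations on 'I_h whose edges join consecutive
   indices then finish the proof:
   - a walk from i to i.+1 must use the edge i -- i.+1 itself (the walk
     cannot leave {0, ..., i} otherwise), so connectedness forces every
     consecutive pair to overlap after restriction;
   - conversely, if all consecutive pairs are joined, a symmetric relation
     is connected. *)

Lemma overlapE (T : finType) (A B : {set T}) :
  overlap A B = [&& A :&: B != set0, A :\: B != set0 & B :\: A != set0].
Proof. by rewrite /overlap !setD_eq0. Qed.

Lemma overlap_sym (T : finType) (A B : {set T}) : overlap A B = overlap B A.
Proof. by rewrite /overlap setIC [~~ (A \subset B) && _]andbC. Qed.

Lemma overlap_meetE (T : finType) (A B C : {set T}) :
  overlap (A :&: C) (B :&: C) =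
  [&& (A :&: B) :&: C != set0, (A :\: B) :&: C != set0 & (B :\: A) :&: C != set0].
Proof.
have pieceE (X Y : {set T}) : (X :&: C) :\: (Y :&: C) = (X :\: Y) :&: C.
  by apply/setP => x; rewrite !inE; case: (x \in X) (x \in Y) (x \in C) => [] [] [].
by rewrite overlapE !pieceE setIACA setIid.
Qed.

Lemma overlap_meetW (T : finType) (A B C : {set T}) :
  overlap (A :&: C) (B :&: C) -> overlap A B.
Proof.
rewrite overlap_meetE overlapE => /and3P [nzI nzAB nzBA].
by apply/and3P; split; [move: nzI | move: nzAB | move: nzBA];
  apply: contraNN => /eqP ->; rewrite set0I.
Qed.

Section ConsecutiveEdges.
Variables (h : nat) (r : rel 'I_h).

Lemma connect_consecutive_edge (i j : 'I_h) :
  (forall x y : 'I_h, r x y -> (x.+1 == y :> nat) || (y.+1 == x :> nat)) ->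
  i.+1 = j :> nat -> connect r i j -> r i j.
Proof.
move=> edges ij /connectP [p walk last_p]; apply/negPn/negP => no_ij.
(* Without the edge i -> j, a walk starting in {0, ..., i} stays there. *)
have stay_low (x : 'I_h) q : x <= i -> path r x q -> last x q <= i.
  elim: q x => [|y q IH] x //= le_xi /andP [rxy walk_q]; apply: IH walk_q.
  case/orP: (edges x y rxy) => /eqP xy; last by apply: ltnW; rewrite xy.
  rewrite -xy ltn_neqAle le_xi andbT; apply: contraNneq no_ij => xi.
  have -> : i = x by exact: val_inj.
  by have -> : j = y by apply: val_inj; rewrite /= -ij -xy xi.
by have := stay_low i p (leqnn i) walk; rewrite -last_p -ij ltnn.
Qed.

Lemma connect_up :
  (forall x y : 'I_h, x.+1 = y :> nat -> r x y) ->
  forall a b : 'I_h, a <= b -> connect r a b.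
Proof.
move=> step a [b lt_bh]; elim: b lt_bh => [|b IH] lt_bh le_ab.
  by rewrite (_ : a = Ordinal lt_bh) ?connect0 //; apply/val_inj/eqP; rewrite /= -leqn0.
rewrite leq_eqVlt in le_ab; case/orP: le_ab => [/eqP ab | lt_ab].
  by rewrite (_ : a = Ordinal lt_bh) ?connect0 //; exact: val_inj.
apply: connect_trans (IH (ltnW lt_bh) lt_ab) (connect1 _).
exact: step.
Qed.

End ConsecutiveEdges.

Theorem mainTheorem10 (T : finType) (h : nat) (R : 'I_h -> {set T}) (C : {set T}) :
  2 <= h ->
  (forall i j : 'I_h, overlap (R i) (R j) = (i.+1 == j :> nat) || (j.+1 == i :> nat)) ->
  C \subset \bigcup_(i < h) R i ->
  overlap_connected (fun i : 'I_h => R i :&: C) <->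
  (forall i j : 'I_h, i.+1 = j :> nat ->
     [/\ (R i :\: R j) :&: C != set0,
         (R i :&: R j) :&: C != set0 &
         (R j :\: R i) :&: C != set0]).
Proof.
move=> _ path_graph _; set r := overlap_rel (fun i : 'I_h => R i :&: C).
have edges (x y : 'I_h) : r x y -> (x.+1 == y :> nat) || (y.+1 == x :> nat).
  by move/overlap_meetW; rewrite path_graph.
split=> [connected i j ij | pieces i j].
  have := connect_consecutive_edge edges ij (connected i j).
  by rewrite /r /overlap_rel overlap_meetE => /and3P [].
have step (x y : 'I_h) : x.+1 = y :> nat -> r x y.
  by move=> xy; have [] := pieces x y xy; rewrite /r /overlap_rel overlap_meetE => -> -> ->.
have r_sym : symmetric r by move=> x y; rewrite /r /overlap_rel overlap_sym.
have [le_ij | lt_ji] := leqP i j; first exact: connect_up.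
by rewrite (sym_connect_sym r_sym); apply: connect_up step _ _ (ltnW lt_ji).
Qed.
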